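(* Let $r>0$, $0<p<1$, $q=1-p$, and let $X\sim\mathcal{UNB}(r,p)$ with probability mass function $$p(x)=\frac{q^{x}p^{r}}{1+x}\binom{r+x-1}{x}\,{}_2F_1(1,r+x;2+x;q),\qquad x=0,1,2,\dots.$$ Then for every $x=0,1,2,\dots$, $$p(x+1)=p(x)-\frac{p^{r}q^{x}}{x+1}\binom{r+x-1}{r-1},$$ and consequently $p(x+1)<p(x)$ for all $x\ge 0$, i.e. the distribution is strictly decreasing with mode at $0$.
   Context: For real $r>0$ and integer $x\ge0$, $\binom{r+x-1}{x}=\binom{r+x-1}{r-1}=\frac{\Gamma(r+x)}{x!\,\Gamma(r)}$. ${}_2F_1(a,b;c;z)=\sum_{n\ge0}\frac{(a)_n(b)_n}{(c)_n}\frac{z^n}{n!}$ with $(s)_n=s(s+1)\cdots(s+n-1)$, $(s)_0=1$. $\mathcal{UNB}(r,p)$ is the law of $X$ where $N$ is negative binomial with $P(N=n)=\binom{r+n-1}{n}p^rq^n$ and $X\mid N=n$ is uniform on $\{0,\dots,n\}$. *)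

From Stdlib Require Import Reals Arith.
From Coquelicot Require Import Coquelicot.
Open Scope R_scope.

Fixpoint poch (s : R) (n : nat) : R :=
  match n with
  | O => 1
  | S m => poch s m * (s + INR m)
  end.

(* Generalized binomial coefficient binom(r+x-1, x) = Gamma(r+x)/(x! Gamma(r))
   = (r)_x / x!  (for real r > 0 and integer x >= 0); this is also
   binom(r+x-1, r-1) by the convention of the paper. *)
Definition nbinom (r : R) (x : nat) : R := poch r x / INR (Factorial.fact x).

Definition hyp2F1 (a b c z : R) : R :=
  Series (fun n => poch a n * poch b n / poch c n * z ^ n / INR (Factorial.fact n)).

Definition nb_pmf (r p : R) (n : nat) : R :=
  nbinom r n * Rpower p r * (1 - p) ^ n.

(* UNB(r,p): X | N = n uniform on {0,...,n}, N negative binomial.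
   P(X = x) = sum_n P(N = n) * [x <= n] / (n+1). *)
Definition unb_pmf (r p : R) (x : nat) : R :=
  Series (fun n => nb_pmf r p n * (if Nat.leb x n then / INR (n + 1) else 0)).

From Stdlib Require Import Reals Lra Lia.
From Coquelicot Require Import Coquelicot.
Open Scope R_scope.

(* Given N = n, the event X = x has probability 1/(n+1) for every x <= n, so
   P(X = x) is the tail sum over n >= x of the weights w n = P(N = n)/(n+1).
   Hence P(X = x) - P(X = x+1) = w x > 0, which is the recurrence and the strict
   decrease.  The closed form follows by comparing the tail sum termwise with the
   hypergeometric series: w (x+k) / w x = (1)_k (r+x)_k / (2+x)_k q^k / k!. *)

Lemma poch_pos (s : R) (n : nat) : 0 < s -> 0 < poch s n.
Proof.
  intro hs; induction n as [|n IH]; simpl; [lra|].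
  apply Rmult_lt_0_compat; [exact IH|]. pose proof (pos_INR n); lra.
Qed.

Lemma poch_add (s : R) (x k : nat) : poch s (x + k) = poch s x * poch (s + INR x) k.
Proof.
  induction k as [|k IH]; simpl.
  - rewrite Nat.add_0_r; ring.
  - rewrite Nat.add_succ_r; simpl. rewrite IH, plus_INR; ring.
Qed.

Lemma poch_nat_succ (m k : nat) :
  poch (INR m + 1) k * INR (Factorial.fact m) = INR (Factorial.fact (m + k)).
Proof.
  induction k as [|k IH]; cbn [poch].
  - rewrite Nat.add_0_r; ring.
  - rewrite Nat.add_succ_r.
    change (Factorial.fact (S (m + k))) with (S (m + k) * Factorial.fact (m + k))%nat.
    rewrite mult_INR, <- IH, S_INR, plus_INR. ring.
Qed.

Lemma poch_1 (k : nat) : poch 1 k = INR (Factorial.fact k).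
Proof.
  pose proof (poch_nat_succ 0 k) as h; simpl in h.
  rewrite Rplus_0_l, Rmult_1_r in h; exact h.
Qed.

Lemma fact_INR_pos (n : nat) : 0 < INR (Factorial.fact n).
Proof. apply lt_0_INR, Factorial.lt_O_fact. Qed.

Lemma fact_S_INR (n : nat) : INR (Factorial.fact (S n)) = (INR n + 1) * INR (Factorial.fact n).
Proof.
  change (Factorial.fact (S n)) with (S n * Factorial.fact n)%nat.
  rewrite mult_INR, S_INR; ring.
Qed.

Lemma is_lim_seq_affine_ratio (a : R) :
  is_lim_seq (fun n => (a + INR n) / (INR n + 2)) 1.
Proof.
  assert (inv_lim : is_lim_seq (fun n => / INR (n + 2)) 0).
  { change (is_lim_seq (fun n => / INR (n + 2)) (Rbar_inv p_infty)).
    apply is_lim_seq_inv; [|discriminate].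
    apply (is_lim_seq_incr_n INR 2 p_infty), is_lim_seq_INR. }
  eapply is_lim_seq_ext with (u := fun n => 1 + (a - 2) * / INR (n + 2)).
  - intro n. rewrite plus_INR. change (INR 2) with 2.
    field. pose proof (pos_INR n); lra.
  - replace (Finite 1) with (Rbar_plus 1 (Rbar_mult (a - 2) 0))
      by (simpl; f_equal; ring).
    apply is_lim_seq_plus'; [apply is_lim_seq_const|].
    apply is_lim_seq_mult'; [apply is_lim_seq_const | exact inv_lim].
Qed.

Lemma ex_series_indicator_ge (c : nat -> R) (x : nat) :
  ex_series c -> ex_series (fun n => if Nat.leb x n then c n else 0).
Proof.
  intro hc. apply (ex_series_incr_n _ x).
  apply ex_series_ext with (fun k => c (x + k)%nat).
  - intro k. replace (Nat.leb x (x + k)) with true by (symmetry; apply Nat.leb_le; lia).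
    reflexivity.
  - now apply ex_series_incr_n.
Qed.

Lemma Series_indicator_ge (c : nat -> R) (x : nat) : ex_series c ->
  Series (fun n => if Nat.leb x n then c n else 0) = Series (fun k => c (x + k)%nat).
Proof.
  revert c; induction x as [|x IH]; intros c hc.
  - reflexivity.
  - rewrite Series_incr_1 by now apply ex_series_indicator_ge.
    simpl; rewrite Rplus_0_l.
    rewrite (IH (fun k => c (S k))) by exact (proj1 (ex_series_incr_1 c) hc).
    reflexivity.
Qed.

Lemma Series_tail_S (a : nat -> R) (x : nat) : ex_series a ->
  Series (fun k => a (x + k)%nat) = a x + Series (fun k => a (S x + k)%nat).
Proof.
  intro ha. rewrite Series_incr_1 by now apply ex_series_incr_n.
  rewrite Nat.add_0_r. f_equal. apply Series_ext; intro k. f_equal; lia.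
Qed.

Section UniformNegativeBinomial.

Variables r p : R.

Definition unb_weight (n : nat) : R := nb_pmf r p n / INR (n + 1).

Lemma unb_weight_closed (n : nat) :
  unb_weight n = Rpower p r * (1 - p) ^ n / (INR n + 1) * nbinom r n.
Proof.
  unfold unb_weight, nb_pmf. rewrite plus_INR. simpl.
  field. pose proof (pos_INR n); lra.
Qed.

Lemma unb_weight_hyp2F1_term (x k : nat) :
  unb_weight (x + k) =
    (1 - p) ^ x * Rpower p r / (1 + INR x) * nbinom r x
    * (poch 1 k * poch (r + INR x) k / poch (2 + INR x) k
       * (1 - p) ^ k / INR (Factorial.fact k)).
Proof.
  assert (poch_2x : poch (2 + INR x) k
                    = INR (Factorial.fact (S x + k)) / INR (Factorial.fact (S x))).
  { rewrite <- poch_nat_succ, S_INR.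
    replace (INR x + 1 + 1) with (2 + INR x) by ring.
    field. apply Rgt_not_eq, fact_INR_pos. }
  rewrite unb_weight_closed. unfold nbinom.
  rewrite poch_add, poch_1, poch_2x, pow_add, plus_Sn_m, !fact_S_INR.
  pose proof (fact_INR_pos x). pose proof (fact_INR_pos k).
  pose proof (fact_INR_pos (x + k)).
  pose proof (pos_INR x). pose proof (pos_INR (x + k)).
  field. repeat split; lra.
Qed.

Hypothesis hr : 0 < r.
Hypothesis hp0 : 0 < p.
Hypothesis hp1 : p < 1.

Lemma unb_weight_pos (n : nat) : 0 < unb_weight n.
Proof.
  rewrite unb_weight_closed. unfold nbinom.
  pose proof (pos_INR n). pose proof (exp_pos (r * ln p)).
  pose proof (pow_lt (1 - p) n ltac:(lra)).
  pose proof (poch_pos r n hr). pose proof (fact_INR_pos n).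
  unfold Rpower. apply Rmult_lt_0_compat; apply Rdiv_lt_0_compat; try nra.
Qed.

Lemma unb_weight_ratio (n : nat) :
  unb_weight (S n) / unb_weight n = (1 - p) * ((r + INR n) / (INR n + 2)).
Proof.
  rewrite !unb_weight_closed. unfold nbinom. simpl poch.
  rewrite fact_S_INR, S_INR. simpl pow.
  pose proof (pos_INR n). pose proof (fact_INR_pos n).
  pose proof (poch_pos r n hr). pose proof (exp_pos (r * ln p)).
  pose proof (pow_lt (1 - p) n ltac:(lra)).
  unfold Rpower. field. repeat split; lra.
Qed.

Lemma ex_series_unb_weight : ex_series unb_weight.
Proof.
  assert (abs_eq : forall n, Rabs (unb_weight n) = unb_weight n)
    by (intro n; apply Rabs_pos_eq, Rlt_le, unb_weight_pos).
  apply ex_series_ext with (fun n => Rabs (unb_weight n)); [exact abs_eq|].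
  apply ex_series_DAlembert with (1 - p); [lra | intro n; apply Rgt_not_eq, unb_weight_pos|].
  eapply is_lim_seq_ext.
  { intro n. rewrite <- unb_weight_ratio.
    symmetry; apply Rabs_pos_eq, Rlt_le, Rdiv_lt_0_compat; apply unb_weight_pos. }
  replace (Finite (1 - p)) with (Rbar_mult (1 - p) 1) by (simpl; f_equal; ring).
  apply is_lim_seq_mult'; [apply is_lim_seq_const | apply is_lim_seq_affine_ratio].
Qed.

Lemma unb_pmf_tail (x : nat) : unb_pmf r p x = Series (fun k => unb_weight (x + k)).
Proof.
  unfold unb_pmf. rewrite <- Series_indicator_ge by exact ex_series_unb_weight.
  apply Series_ext; intro n. unfold unb_weight. destruct (Nat.leb x n); unfold Rdiv; ring.
Qed.

Lemma unb_pmf_S (x : nat) : unb_pmf r p x = unb_weight x + unb_pmf r p (S x).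
Proof.
  rewrite !unb_pmf_tail. apply Series_tail_S, ex_series_unb_weight.
Qed.

End UniformNegativeBinomial.

Theorem mainTheorem2 (r p : R) (hr : 0 < r) (hp0 : 0 < p) (hp1 : p < 1) :
  let q := 1 - p in
  (* the pmf of X ~ UNB(r,p) has the stated closed form *)
  (forall x : nat,
     unb_pmf r p x =
       q ^ x * Rpower p r / (1 + INR x) * nbinom r x
       * hyp2F1 1 (r + INR x) (2 + INR x) q) /\
  (* recurrence *)
  (forall x : nat,
     unb_pmf r p (S x) =
       unb_pmf r p x - Rpower p r * q ^ x / (INR x + 1) * nbinom r x) /\
  (* strict decrease *)
  (forall x : nat, unb_pmf r p (S x) < unb_pmf r p x).
Proof.
  intro q; split; [|split]; intro x.
  - rewrite (unb_pmf_tail r p hr hp0 hp1 x). unfold hyp2F1.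
    rewrite <- Series_scal_l. apply Series_ext; intro k.
    exact (unb_weight_hyp2F1_term r p x k).
  - rewrite (unb_pmf_S r p hr hp0 hp1 x), (unb_weight_closed r p x).
    unfold q; ring.
  - rewrite (unb_pmf_S r p hr hp0 hp1 x).
    pose proof (unb_weight_pos r p hr hp1 x); lra.
Qed.
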